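(* There is a polynomial $\mathit{pol}$, independent of $\langle\mathcal{I},\eta\rangle$ (depending only on the fixed database schema), such that if a database with integrity constraints $\langle\mathcal{I},\eta\rangle$ (in the setting described below) is consistent, then it has a possible world $V$ with $\mathit{size}(V)=O(\mathit{pol}(\mathit{size}(\mathcal{I})+\mathit{size}(\eta)))$.
   Context: Constants: $\mathit{Dom}=\{\bot,1,2,\dots\}$ with $\bot$ the null value, $\mathit{Dom}_d=\{1,2,\dots\}$ (integers written in binary/decimal); the only built-in relations are $=$ and $\le$. The set of base predicate symbols (number and arities) is fixed. $\mathit{size}(\cdot)$ is the size of the representation. Facts are ground atoms; definite facts contain no $\bot$. For tuples, $t\preceq t'$ if each $t_i=t'_i$ or $t_i=\bot$; $a\approx b$ if some $s$ has $a\preceq s,b\preceq s$. For a set $S$ of facts: $S^\Downarrow=\{a:\exists b\in S,a\preceq b\}$, $S^\Uparrow=\{a:\exists b\in S,b\preceq a\}$, $S^\approx=\{a:\exists b\in S,b\approx a\}$, $S^\sim=S^\approx\setminus S^\Downarrow$. A database is $\mathcal{I}=\langle D,E\rangle$, $D,E$ finite sets of base facts; $\mathcal{I}_t=D^\Downarrow$, $\mathcal{I}_u=D^\sim\setminus E^\Uparrow$; a possible world of $\mathcal{I}$ is a set $W$ of definite facts with $\mathcal{I}_t\subseteq W^\Downarrow$ and $W\subseteq\mathcal{I}_t\cup\mathcal{I}_u$. Integrity constraints have the form $\exists X\,\forall Y\,(A_1\wedge\dots\wedge A_k\rightarrow B_1\vee\dots\vee B_m)$, atoms without $\bot$ over base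 and built-in predicates, every variable in $X\cup Y$ and occurring in some base-predicate $A_i$. A possible world of $\langle\mathcal{I},\eta\rangle$ is a possible world of $\mathcal{I}$ satisfying every constraint of $\eta$ (as an interpretation with domain $\mathit{Dom}_d$); $\langle\mathcal{I},\eta\rangle$ is consistent if one exists. *)

From Stdlib Require List.
From mathcomp Require Import all_boot.
Set Implicit Arguments. Unset Strict Implicit. Unset Printing Implicit Defensive.

(** Constants: Dom = nat, where 0 encodes the null value ⊥ and every
    n > 0 is the integer n (Dom_d = positive nats). *)
Definition null : nat := 0.

(** Schema: [np] base predicate symbols 0..np-1, with arity [ar p]. *)

Definition fact := (nat * seq nat)%type.

Definition wf_fact (np : nat) (ar : nat -> nat) (f : fact) : Prop :=
  f.1 < np /\ size f.2 = ar f.1.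

Definition definite (f : fact) : Prop := forall c, c \in f.2 -> c != null.

Definition prec (a b : fact) : Prop :=
  a.1 = b.1 /\ size a.2 = size b.2 /\
  forall i, i < size a.2 -> nth null a.2 i = nth null b.2 i \/ nth null a.2 i = null.

Definition approxf (a b : fact) : Prop := exists s, prec a s /\ prec b s.

Definition fset_ := fact -> Prop.
Definition down (S : fset_) : fset_ := fun a => exists2 b, S b & prec a b.
Definition up (S : fset_) : fset_ := fun a => exists2 b, S b & prec b a.
Definition approxs (S : fset_) : fset_ := fun a => exists2 b, S b & approxf b a.
Definition sims (S : fset_) : fset_ := fun a => approxs S a /\ ~ down S a.

Definition of_seq (s : seq fact) : fset_ := fun a => a \in s.

Definition It (D : seq fact) : fset_ := down (of_seq D).
Definition Iu (D E : seq fact) : fset_ :=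
  fun a => sims (of_seq D) a /\ ~ up (of_seq E) a.

Definition possible_world (D E : seq fact) (W : fset_) : Prop :=
  (forall a, W a -> definite a) /\
  (forall a, It D a -> down W a) /\
  (forall a, W a -> It D a \/ Iu D E a).

(** Integrity constraints  ∃X ∀Y (A1 ∧ … ∧ Ak → B1 ∨ … ∨ Bm).
    Variables are numbered: 0..nx-1 are the existential ones (X),
    nx..nx+ny-1 the universal ones (Y). *)
Inductive term := TVar of nat | TConst of nat.
Inductive atom :=
  | ABase of nat & seq term
  | AEq of term & term
  | ALe of term & term.

Record ic := IC { ic_nx : nat; ic_ny : nat; ic_body : seq atom; ic_head : seq atom }.

Definition term_ok (nv : nat) (t : term) : Prop :=
  match t with TVar i => i < nv | TConst c => 0 < c end.

Definition atom_ok (np : nat) (ar : nat -> nat) (nv : nat) (a : atom) : Prop :=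
  match a with
  | ABase p ts => p < np /\ size ts = ar p /\ forall t, Stdlib.Lists.List.In t ts -> term_ok nv t
  | AEq s t | ALe s t => term_ok nv s /\ term_ok nv t
  end.

Definition is_base (a : atom) : bool := if a is ABase _ _ then true else false.

Definition atom_has_var (i : nat) (a : atom) : Prop :=
  match a with ABase _ ts => Stdlib.Lists.List.In (TVar i) ts | _ => False end.

Definition wf_ic (np : nat) (ar : nat -> nat) (c : ic) : Prop :=
  let nv := ic_nx c + ic_ny c in
  (forall a, Stdlib.Lists.List.In a (ic_body c ++ ic_head c) -> atom_ok np ar nv a) /\
  (forall i, i < nv -> exists2 a, Stdlib.Lists.List.In a (ic_body c) & atom_has_var i a).

Definition teval (v : nat -> nat) (t : term) : nat :=
  match t with TVar i => v i | TConst c => c end.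

Definition aholds (W : fset_) (v : nat -> nat) (a : atom) : Prop :=
  match a with
  | ABase p ts => W (p, map (teval v) ts)
  | AEq s t => teval v s = teval v t
  | ALe s t => teval v s <= teval v t
  end.

Definition sat_ic (W : fset_) (c : ic) : Prop :=
  exists ex : nat -> nat, (forall i, i < ic_nx c -> 0 < ex i) /\
  forall un : nat -> nat, (forall i, 0 < un i) ->
    let v := fun i => if i < ic_nx c then ex i else un i in
    (forall a, Stdlib.Lists.List.In a (ic_body c) -> aholds W v a) ->
    exists2 a, Stdlib.Lists.List.In a (ic_head c) & aholds W v a.

Definition possible_world_ic (D E : seq fact) (eta : seq ic) (W : fset_) : Prop :=
  possible_world D E W /\ forall c, Stdlib.Lists.List.In c eta -> sat_ic W c.

Definition consistent (D E : seq fact) (eta : seq ic) : Prop :=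
  exists W, possible_world_ic D E eta W.

Definition nsize (n : nat) : nat := (trunc_log 2 n).+1.
Definition fact_size (f : fact) : nat := (nsize f.1 + sumn (map nsize f.2)).+1.
Definition facts_size (s : seq fact) : nat := sumn (map fact_size s).
Definition db_size (D E : seq fact) : nat := facts_size D + facts_size E.
Definition term_size (t : term) : nat :=
  match t with TVar i => (nsize i).+1 | TConst c => (nsize c).+1 end.
Definition atom_size (a : atom) : nat :=
  match a with
  | ABase p ts => (nsize p + sumn (map term_size ts)).+1
  | AEq s t | ALe s t => (term_size s + term_size t).+1
  end.
Definition ic_size (c : ic) : nat :=
  (ic_nx c + ic_ny c + sumn (map atom_size (ic_body c))
     + sumn (map atom_size (ic_head c))).+1.
Definition eta_size (eta : seq ic) : nat := sumn (map ic_size eta).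

(** Polynomials with natural coefficients (low degree first). *)
Definition peval (p : seq nat) (n : nat) : nat := foldr (fun c acc => c + n * acc) 0 p.

From Stdlib Require List.
From mathcomp Require Import all_boot zify.
From Stdlib Require Import ClassicalEpsilon.
Set Implicit Arguments. Unset Strict Implicit.

(** Start from any possible world [W] of <I, eta>.  Keep only its facts over a
    finite set [dom] of values: the constants of [D], [E] and [eta], the values
    of one fact of [W] above each fact of [D], and the values chosen for the
    existential variables of each constraint.  The result is still a possible
    world (each kept fact inherits its status from [W]), and it satisfies every
    constraint: once the existential witnesses are fixed the constraint is
    universal, and all its constants lie in [dom].  Finally, the values above
    the largest constant [B] are renamed, preserving order, onto
    [B+1, ..., B+|dom|]; this respects [=], [<=] and the constants.  Now every
    value has O(size) bits and there are at most [np (|dom|+1)^A] facts, [A]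
    the largest arity, which gives a bound of degree [A+1] in the size. *)

Lemma leq_sumn_map (T : Type) (F G : T -> nat) s :
  (forall x, F x <= G x) -> sumn (map F s) <= sumn (map G s).
Proof. by move=> FG; elim: s => //= x s IH; rewrite leq_add. Qed.

Lemma sumn_map_flatten (T : Type) (F : nat -> nat) (g : T -> seq nat) s :
  sumn (map F (flatten (map g s))) = sumn (map (fun y => sumn (map F (g y))) s).
Proof. by elim: s => //= y s IH; rewrite map_cat sumn_cat IH. Qed.

Lemma In_cat (T : Type) (x : T) s1 s2 :
  List.In x (s1 ++ s2) <-> List.In x s1 \/ List.In x s2.
Proof. by elim: s1 => /= [|y s1 ->]; tauto. Qed.

Lemma In_mem_map (T : Type) (U : eqType) (f : T -> U) s t :
  List.In t s -> f t \in map f s.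
Proof. by elim: s => //= x s IH [->|/IH]; rewrite inE ?eqxx // => ->; rewrite orbT. Qed.

Lemma mem_map_In (T : Type) (U : eqType) (f : T -> U) s y :
  y \in map f s -> exists2 t, List.In t s & y = f t.
Proof.
elim: s => //= x s IH; rewrite inE => /orP [/eqP ->|/IH [t ts ->]].
  by exists x; [left | ].
by exists t; [right | ].
Qed.

Lemma eq_map_In (T U : Type) (f g : T -> U) s :
  (forall t, List.In t s -> f t = g t) -> map f s = map g s.
Proof.
elim: s => //= x s IH fg; rewrite fg ?IH //; last by left.
by move=> t ts; apply: fg; right.
Qed.

Lemma mem_flatten_map_In (T : Type) (U : eqType) (g : T -> seq U) s y x :
  List.In y s -> x \in g y -> x \in flatten (map g s).
Proof.
elim: s => //= z s IH [->|/IH h] xg; rewrite mem_cat ?xg //.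
by rewrite h ?orbT.
Qed.

Lemma sumn_map_le_const (T : eqType) (F : T -> nat) s K :
  {in s, forall x, F x <= K} -> sumn (map F s) <= size s * K.
Proof.
elim: s => //= x s IH FK; rewrite mulSn leq_add ?FK ?mem_head // IH // => y ys.
by rewrite FK // inE ys orbT.
Qed.

Lemma leq_sumn_map_mem (T : eqType) (F : T -> nat) s x : x \in s -> F x <= sumn (map F s).
Proof.
elim: s => //= y s IH; rewrite inE => /orP [/eqP ->|/IH h]; first exact: leq_addr.
exact: leq_trans h (leq_addl _ _).
Qed.

Lemma leq_exp2rW m n e : m <= n -> m ^ e <= n ^ e.
Proof. by move=> mn; case: e => // e; rewrite leq_exp2r. Qed.

Lemma prec_refl a : prec a a.
Proof. by split=> //; split=> // i _; left. Qed.

Lemma prec_trans a b c : prec a b -> prec b c -> prec a c.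
Proof.
move=> [e1 [s1 h1]] [e2 [s2 h2]]; split; first by rewrite e1.
split; first by rewrite s1.
move=> i hi; case: (h1 i hi) => [->|->]; last by right.
by apply: h2; rewrite -s1.
Qed.

Lemma definite_prec_eq f s : definite f -> prec f s -> s = f.
Proof.
case: f s => p t [q u] df [/= <- [/= st h]]; congr pair.
apply: (@eq_from_nth _ null) => // i hi; rewrite -st in hi.
case: (h i hi) => // e; by move: (df _ (mem_nth null hi)); rewrite e.
Qed.

(** * Order-preserving compression of values *)

Section Compression.
Variables (B : nat) (dom : seq nat).

Definition compress (x : nat) : nat :=
  if x <= B then x else B + count (fun y => B < y <= x) dom.

Lemma compress_id x : x <= B -> compress x = x.
Proof. by rewrite /compress => ->. Qed.

Lemma compress_bound x : compress x <= B + size dom.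
Proof.
rewrite /compress; case: ifP => [xB|_]; first exact: leq_trans xB (leq_addr _ _).
by rewrite leq_add2l count_size.
Qed.

Lemma compress_gt0 x : x \in dom -> 0 < x -> 0 < compress x.
Proof.
move=> xd x_gt0; rewrite /compress; case: (leqP x B) => // xB.
by rewrite addn_gt0 -has_count; apply/orP; right; apply/hasP; exists x; rewrite ?xB ?leqnn.
Qed.

Lemma compress_lt x y : x < y -> y \in dom -> compress x < compress y.
Proof.
move=> xy yd; rewrite /compress; case: (leqP y B) => yB.
  by rewrite (leq_trans (ltnW xy) yB).
have between_gt0 z : z < y -> 0 < count (fun u => z < u <= y) dom.
  by move=> zy; rewrite -has_count; apply/hasP; exists y; rewrite ?zy ?leqnn.
case: (leqP x B) => xB.
  by rewrite (leq_ltn_trans xB) // -[X in X < _]addn0 ltn_add2l between_gt0.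
rewrite ltn_add2l.
have ->: count (fun z => B < z <= y) dom
    = count (fun z => B < z <= x) dom + count (fun z => x < z <= y) dom.
  rewrite -count_predUI (@eq_count _ (predI _ _) pred0) => [|z /=]; last by lia.
  by rewrite count_pred0 addn0; apply: eq_count => z /=; lia.
by rewrite -[X in X < _]addn0 ltn_add2l between_gt0.
Qed.

Lemma compress_inj : {in dom &, injective compress}.
Proof.
move=> x y xd yd e; case: (ltngtP x y) => // xy.
  by move: (compress_lt xy yd); rewrite e ltnn.
by move: (compress_lt xy xd); rewrite e ltnn.
Qed.

Lemma leq_compress : {in dom &, {mono compress : x y / x <= y}}.
Proof.
move=> x y xd yd; case: (ltngtP x y) => [xy|yx|->]; last by rewrite !leqnn.
  by rewrite ltnW // compress_lt.
by apply/negbTE; rewrite -ltnNge compress_lt.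
Qed.

Lemma map_compress_inj s1 s2 : {subset s1 <= dom} -> {subset s2 <= dom} ->
  map compress s1 = map compress s2 -> s1 = s2.
Proof.
elim: s1 s2 => [|x s1 IH] [|y s2] //= sub1 sub2 [exy es].
rewrite (compress_inj (sub1 _ (mem_head _ _)) (sub2 _ (mem_head _ _)) exy).
by rewrite (IH s2) // => z zs; [apply: sub1 | apply: sub2]; rewrite inE zs orbT.
Qed.

Definition uncompress (y : nat) : nat := nth 0 dom (find (fun x => compress x == y) dom).

Lemma uncompressK y : y \in map compress dom ->
  uncompress y \in dom /\ compress (uncompress y) = y.
Proof.
case/mapP=> x xd ->.
have hx : has (fun z => compress z == compress x) dom by apply/hasP; exists x.
by split; [rewrite mem_nth // -has_find | apply/eqP; exact: (nth_find 0 hx)].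
Qed.

Definition compress_fact (f : fact) : fact := (f.1, map compress f.2).

Lemma compress_fact_id f : {in f.2, forall x, x <= B} -> compress_fact f = f.
Proof.
case: f => p t /= tB; congr pair; apply: map_id_in => x /tB; exact: compress_id.
Qed.

Lemma compress_fact_definite f :
  {subset f.2 <= dom} -> definite f -> definite (compress_fact f).
Proof.
move=> fd df _ /mapP [x xf ->].
by rewrite -lt0n compress_gt0 ?fd // lt0n df.
Qed.

Lemma prec_compress_fact b f :
  (forall x, x \in b.2 -> x <= B /\ (x != null -> x \in dom)) -> {subset f.2 <= dom} ->
  prec b (compress_fact f) <-> prec b f.
Proof.
move=> hb fd; rewrite /prec /compress_fact /= size_map.
split=> -[e [sz h]]; split=> //; split=> // i hi.
all: have [bB bd] := hb _ (mem_nth null hi).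
all: have fi : nth null f.2 i \in dom by rewrite fd // mem_nth // -sz.
all: case: (eqVneq (nth null b.2 i) null) => [|bn]; [by right | left].
all: have [e'|e'] := h i hi; last by rewrite e' eqxx in bn.
  rewrite (nth_map null) -?sz // in e'.
  by apply: compress_inj; rewrite ?bd // -e' compress_id.
by rewrite (nth_map null) -?sz // -e' compress_id.
Qed.

End Compression.

(** * Facts over a finite domain and their size *)

Fixpoint tuples (T : Type) (d : seq T) (k : nat) : seq (seq T) :=
  if k is k'.+1 then [seq x :: t | x <- d, t <- tuples d k'] else [:: [::]].

Lemma mem_tuples (T : eqType) (d : seq T) k t :
  (t \in tuples d k) = (size t == k) && all (mem d) t.
Proof.
elim: k t => [|k IH] [|x t] //=; first by apply/negbTE/allpairsPdep => -[y [u []]].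
apply/allpairsPdep/idP => [[y [u [yd ut [-> ->]]]]|/and3P [sz xd td]].
  by rewrite yd -IH ut.
by exists x, t; rewrite IH -eqSS sz td.
Qed.

Lemma size_tuples (T : Type) (d : seq T) k : size (tuples d k) = size d ^ k.
Proof.
elim: k => //= k IH; rewrite size_allpairs_dep sumnE big_map IH.
by rewrite big_const_seq count_predT iter_addn_0 expnS mulnC.
Qed.

Definition facts_over (np : nat) (ar : nat -> nat) (dom : seq nat) : seq fact :=
  [seq (p, t) | p <- iota 0 np, t <- tuples dom (ar p)].

Lemma mem_facts_over np ar dom f :
  f \in facts_over np ar dom <-> wf_fact np ar f /\ {subset f.2 <= dom}.
Proof.
split=> [/allpairsPdep [p [t [pn tt ->]]]|[[pn sz] fd]].
  by move: pn tt; rewrite mem_iota mem_tuples => pn /andP [/eqP sz /allP td].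
case: f pn sz fd => p t /= pn sz fd; apply/allpairsPdep; exists p, t.
by rewrite mem_iota mem_tuples sz eqxx; split=> //; apply/allP.
Qed.

Lemma size_facts_over np ar dom A : (forall p, p < np -> ar p <= A) ->
  size (facts_over np ar dom) <= np * (size dom).+1 ^ A.
Proof.
move=> arA; rewrite size_allpairs_dep sumnE big_map.
have ->: iota 0 np = index_iota 0 np by rewrite /index_iota subn0.
rewrite -{2}(subn0 np) -sum_nat_const_nat big_nat [X in _ <= X]big_nat.
apply: leq_sum => p /andP [_ pn]; rewrite size_tuples.
apply: leq_trans (leq_pexp2l (ltn0Sn _) (arA p pn)).
by case: (ar p) => // k; rewrite leq_exp2r.
Qed.

Lemma nsize_le x k : 0 < k -> x < 2 ^ k -> nsize x <= k.
Proof.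
move=> k_gt0 xk; rewrite /nsize; case: (posnP x) => [->|x_gt0]; first by rewrite trunc_log0.
by rewrite -(ltn_exp2l _ _ (ltnSn 1)); apply: leq_ltn_trans (trunc_logP (ltnSn 1) x_gt0) xk.
Qed.

Lemma ltn_exp2_nsize x : x < 2 ^ nsize x.
Proof. exact: trunc_log_ltn. Qed.

Lemma size_le_sumn_nsize s : size s <= sumn (map nsize s).
Proof. by elim: s => //= x s IH; rewrite -add1n leq_add. Qed.

Lemma fact_size_compress_fact np ar A B dom K f :
  (forall p, p < np -> ar p <= A) -> 0 < K -> B + size dom < 2 ^ K ->
  wf_fact np ar f -> fact_size (compress_fact B dom f) <= (np + A * K).+1.
Proof.
move=> arA K_gt0 BK [pn sz]; rewrite /fact_size ltnS leq_add //.
  apply: nsize_le; first exact: leq_ltn_trans pn.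
  exact: leq_trans pn (ltnW (ltn_expl _ (ltnSn 1))).
apply: leq_trans (sumn_map_le_const (K := K) _) _ => [y /mapP [x _ ->]|].
  exact: nsize_le K_gt0 (leq_ltn_trans (compress_bound _ _ _) BK).
by rewrite size_map sz leq_mul2r arA ?orbT.
Qed.

Lemma facts_size_compressed np ar A B dom K (P : pred fact) :
  (forall p, p < np -> ar p <= A) -> 0 < K -> B + size dom < 2 ^ K ->
  facts_size (map (compress_fact B dom) (filter P (facts_over np ar dom)))
    <= np * (size dom).+1 ^ A * (np + A * K).+1.
Proof.
move=> arA K_gt0 BK; apply: leq_trans (sumn_map_le_const (K := (np + A * K).+1) _) _.
  move=> a /mapP [f]; rewrite mem_filter => /andP [_ /mem_facts_over [wf _]] ->.
  exact: fact_size_compress_fact arA K_gt0 BK wf.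
rewrite leq_mul2r size_map size_filter (leq_trans (count_size _ _)) ?orbT //.
exact: size_facts_over.
Qed.

Definition atom_terms (a : atom) : seq term :=
  match a with ABase _ ts => ts | AEq s t | ALe s t => [:: s; t] end.

Lemma atom_ok_terms np ar nv a t :
  atom_ok np ar nv a -> List.In t (atom_terms a) -> term_ok nv t.
Proof. by case: a => [p ts [_ [_ /(_ t)]]|s u [? ?] [<-|[<-|[]]]|s u [? ?] [<-|[<-|[]]]]. Qed.

Definition term_consts (t : term) : seq nat := if t is TConst k then [:: k] else [::].
Definition atom_consts (a : atom) : seq nat := flatten (map term_consts (atom_terms a)).
Definition ic_consts (c : ic) : seq nat := flatten (map atom_consts (ic_body c ++ ic_head c)).

Lemma sumn_nsize_ic_consts c : sumn (map nsize (ic_consts c)) <= ic_size c.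
Proof.
have term_le t : sumn (map nsize (term_consts t)) <= term_size t.
  by case: t => [i|k] //=; rewrite addn0.
have atom_le a : sumn (map nsize (atom_consts a)) <= atom_size a.
  rewrite sumn_map_flatten; case: a => [p ts|s t|s t] /=.
  - exact/leqW/(leq_trans (leq_sumn_map _ term_le))/leq_addl.
  - by rewrite addn0 leqW // leq_add.
  - by rewrite addn0 leqW // leq_add.
have := leq_sumn_map (ic_body c) atom_le; have := leq_sumn_map (ic_head c) atom_le.
rewrite sumn_map_flatten /ic_size map_cat sumn_cat; lia.
Qed.

(** * The small world *)

Definition classicb (P : Prop) : bool := if excluded_middle_informative P then true else false.

Lemma classicbP (P : Prop) : reflect P (classicb P).
Proof. by rewrite /classicb; case: excluded_middle_informative => h; constructor. Qed.

Definition sat_ic_with (W : fset_) (c : ic) (ex : nat -> nat) : Prop :=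
  (forall i, i < ic_nx c -> 0 < ex i) /\
  forall un : nat -> nat, (forall i, 0 < un i) ->
    let v := fun i => if i < ic_nx c then ex i else un i in
    (forall a, List.In a (ic_body c) -> aholds W v a) ->
    exists2 a, List.In a (ic_head c) & aholds W v a.

Section SmallWorld.

Variables (np : nat) (ar : nat -> nat) (D E : seq fact) (eta : seq ic) (W : fset_).
Hypothesis wfD : forall f, f \in D -> wf_fact np ar f.
Hypothesis wfeta : forall c, List.In c eta -> wf_ic np ar c.
Hypothesis W_world : possible_world_ic D E eta W.

Definition cover (b : fact) : fact := epsilon (inhabits b) (fun w => W w /\ prec b w).

Lemma cover_spec b : b \in D -> W (cover b) /\ prec b (cover b).
Proof.
move=> bD; apply: (epsilon_spec (inhabits b) (fun w => W w /\ prec b w)).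
by have [w Ww bw] := W_world.1.2.1 b (ex_intro2 _ _ b bD (prec_refl b)); exists w.
Qed.

Definition witness (c : ic) : nat -> nat := epsilon (inhabits id) (sat_ic_with W c).

Lemma witness_spec c : List.In c eta -> sat_ic_with W c (witness c).
Proof. by move=> ceta; apply: (epsilon_spec (inhabits id)); apply: W_world.2. Qed.

Definition consts : seq nat := flatten (map snd (D ++ E)) ++ flatten (map ic_consts eta).

Definition dom : seq nat := filter (predC1 null)
  (consts ++ flatten (map (fun c => map (witness c) (iota 0 (ic_nx c))) eta)
          ++ flatten (map (fun b => (cover b).2) D)).

Definition bound : nat := \max_(k <- consts) k.

Definition small_world : seq fact := map (compress_fact bound dom)
  (filter (fun f => classicb (W f)) (facts_over np ar dom)).

Lemma dom_gt0 x : x \in dom -> 0 < x.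
Proof. by rewrite mem_filter lt0n => /andP []. Qed.

Lemma consts_kept x : x \in consts -> x <= bound /\ (x != null -> x \in dom).
Proof.
move=> xc; split; first exact: leq_bigmax_seq.
by move=> x0; rewrite mem_filter /= x0 mem_cat xc.
Qed.

Lemma facts_kept b x : b \in D ++ E -> x \in b.2 -> x <= bound /\ (x != null -> x \in dom).
Proof.
move=> bDE xb; apply: consts_kept; rewrite mem_cat; apply/orP; left.
by apply/flatten_mapP; exists b.
Qed.

Lemma ic_consts_kept c a k : List.In c eta -> List.In a (ic_body c ++ ic_head c) ->
  List.In (TConst k) (atom_terms a) -> k <= bound /\ k \in dom.
Proof.
move=> ceta aH kt; have [kB kd] : k <= bound /\ (k != null -> k \in dom).
  apply: consts_kept; rewrite mem_cat; apply/orP; right.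
  apply: (mem_flatten_map_In ceta); apply: (mem_flatten_map_In aH).
  by apply: (mem_flatten_map_In kt); rewrite inE.
by split=> //; apply: kd; have := atom_ok_terms ((wfeta ceta).1 a aH) kt; rewrite /= lt0n.
Qed.

Lemma cover_dom b : b \in D -> {subset (cover b).2 <= dom}.
Proof.
move=> bD x xc; have Wc := (cover_spec bD).1.
rewrite mem_filter /= (W_world.1.1 _ Wc _ xc) !mem_cat orbA orbC.
by apply/orP; left; apply/flatten_mapP; exists b.
Qed.

Lemma witness_dom c i : List.In c eta -> i < ic_nx c -> witness c i \in dom.
Proof.
move=> ceta ic; rewrite mem_filter /= -lt0n (witness_spec ceta).1 // !mem_cat.
apply/orP; right; apply/orP; left; apply: (mem_flatten_map_In ceta).
by apply: map_f; rewrite mem_iota.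
Qed.

Local Notation squeeze := (compress bound dom).
Local Notation squeeze_fact := (compress_fact bound dom).

Lemma mem_small_world a : a \in small_world <->
  exists f, [/\ W f, wf_fact np ar f, {subset f.2 <= dom} & a = squeeze_fact f].
Proof.
split=> [/mapP [f]|[f [Wf wf fd ->]]].
  by rewrite mem_filter => /andP [/classicbP Wf /mem_facts_over [wf fd]] ->; exists f.
apply: map_f; rewrite mem_filter; apply/andP.
by split; [apply/classicbP | apply/mem_facts_over].
Qed.

Lemma small_world_vals a x : a \in small_world -> x \in a.2 -> x \in map squeeze dom.
Proof. by case/mem_small_world=> f [_ _ fd ->] /mapP [y /fd yd ->]; apply: map_f. Qed.

Lemma possible_world_small : possible_world D E (of_seq small_world).
Proof.
have [[Wdef [_ Wsub]] _] := W_world.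
have DE_kept b : b \in D -> forall x, x \in b.2 -> x <= bound /\ (x != null -> x \in dom).
  by move=> bD x; apply: facts_kept; rewrite mem_cat bD.
split; [|split].
- by move=> _ /mem_small_world [f [Wf _ fd ->]]; apply: compress_fact_definite fd (Wdef _ Wf).
- move=> a [b bD ab]; have [Wc bc] := cover_spec bD.
  exists (squeeze_fact (cover b)).
    apply/mem_small_world; exists (cover b); split=> //; last exact: cover_dom.
    by case: bc (wfD bD) => e1 [e2 _]; rewrite /wf_fact -e1 -e2.
  exact/(prec_trans ab)/(prec_compress_fact (DE_kept b bD) (cover_dom bD)).
move=> _ /mem_small_world [f [Wf _ fd ->]].
have df := Wdef _ Wf; have dcf := compress_fact_definite (B := bound) fd df.
case: (Wsub f Wf) => [[b bD fb]|[[[b bD [s [bs fs]]] ndf] nuf]].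
  have {}fb := definite_prec_eq df fb; subst b.
  left; rewrite compress_fact_id => [|x /(DE_kept f bD) []//].
  by exists f => //; apply: prec_refl.
have {s bs fs}bf : prec b f by rewrite -(definite_prec_eq df fs).
right; split; first split.
- exists b => //; exists (squeeze_fact f); split; last exact: prec_refl.
  exact/(prec_compress_fact (DE_kept b bD) fd).
- move=> [b' b'D fb']; apply: ndf; exists b' => //.
  have e := definite_prec_eq dcf fb'.
  have b'f : prec b' f.
    by apply/(prec_compress_fact (DE_kept b' b'D) fd); rewrite e; apply: prec_refl.
  have db' : definite b' by rewrite e.
  by rewrite (definite_prec_eq db' b'f); apply: prec_refl.
- move=> [e eE ef]; apply: nuf; exists e => //.
  apply/(prec_compress_fact (B := bound) _ fd) => // x.
  by apply: facts_kept; rewrite mem_cat eE orbT.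
Qed.

Lemma aholds_small_world nv a v v' : atom_ok np ar nv a ->
  (forall t, List.In t (atom_terms a) ->
     teval v t \in dom /\ squeeze (teval v t) = teval v' t) ->
  aholds (of_seq small_world) v' a <-> aholds W v a.
Proof.
case: a => [p ts|s t|s t] /= ok vv'.
  have tsd : {subset map (teval v) ts <= dom}.
    by move=> x /mem_map_In [t tt ->]; exact: (vv' t tt).1.
  have -> : map (teval v') ts = map squeeze (map (teval v) ts).
    by rewrite -map_comp; apply: eq_map_In => t tt; rewrite /= (vv' t tt).2.
  split=> [/mem_small_world [[q u] [Wf _ ud [-> e]]]|Wf].
    by rewrite (map_compress_inj tsd ud e).
  apply/mem_small_world; exists (p, map (teval v) ts); split=> //.
  by case: ok => pn [sz _]; rewrite /wf_fact size_map.
all: have [[sd <-] [td <-]] := (vv' s (or_introl erefl), vv' t (or_intror (or_introl erefl))).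
  by split=> [/(compress_inj sd td)|->].
by rewrite leq_compress.
Qed.

Lemma sat_ic_small_world c : List.In c eta -> sat_ic (of_seq small_world) c.
Proof.
move=> ceta; have [ex_gt0 Wsat] := witness_spec ceta; have [ok vars] := wfeta ceta.
exists (fun i => squeeze (witness c i)); split=> [i i_nx|un' _ v' body'].
  by apply: compress_gt0; [apply: witness_dom | apply: ex_gt0].
pose un i := if un' i \in map squeeze dom then uncompress bound dom (un' i) else 1.
have un_gt0 i : 0 < un i.
  by rewrite /un; case: ifP => // /uncompressK [ud _]; apply: dom_gt0.
pose v i := if i < ic_nx c then witness c i else un i.
(* A universal variable occurs in some body atom, whose image lies in [small_world]. *)
have var_ok i : i < ic_nx c + ic_ny c -> v i \in dom /\ squeeze (v i) = v' i.
  rewrite /v /v'; case: ifP => [i_nx _|i_nx iv]; first by split=> //; apply: witness_dom.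
  have [[p ts|//|//] aB iin] := vars i iv.
  have : un' i \in map squeeze dom.
    apply: (small_world_vals (body' _ aB)) => /=.
    by have := In_mem_map (teval v') iin; rewrite /= /v' i_nx.
  by rewrite /un => /[dup] /uncompressK [? ?] ->.
have terms_ok a t : List.In a (ic_body c ++ ic_head c) -> List.In t (atom_terms a) ->
    teval v t \in dom /\ squeeze (teval v t) = teval v' t.
  move=> aH tt; case: t tt (atom_ok_terms (ok a aH) tt) => [i|k] tt /= tok.
    exact: var_ok.
  by have [kB kd] := ic_consts_kept ceta aH tt; rewrite compress_id.
have transfer a : List.In a (ic_body c ++ ic_head c) ->
    aholds (of_seq small_world) v' a <-> aholds W v a.
  by move=> aH; apply: aholds_small_world (ok a aH) _ => t; apply: terms_ok.
have [a aH Wa] : exists2 a, List.In a (ic_head c) & aholds W v a.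
  by apply: Wsat un_gt0 _ => a aB; apply/(transfer a)/body' => //; apply/In_cat; left.
by exists a => //; apply/(transfer a) => //; apply/In_cat; right.
Qed.

Lemma possible_world_ic_small : possible_world_ic D E eta (of_seq small_world).
Proof. by split; [exact: possible_world_small | exact: sat_ic_small_world]. Qed.

Local Notation N := (db_size D E + eta_size eta).

Lemma sumn_nsize_consts : sumn (map nsize consts) <= N.
Proof.
rewrite map_cat sumn_cat !sumn_map_flatten leq_add //.
  rewrite /db_size /facts_size -sumn_cat -map_cat.
  by apply: leq_sumn_map => b; apply/leqW/leq_addl.
exact: leq_sumn_map sumn_nsize_ic_consts.
Qed.

Lemma bound_lt : bound < 2 ^ N.
Proof.
rewrite /bound big_seq; apply: (big_ind (fun k => k < 2 ^ N)) => [|x y|k kc].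
- by rewrite expn_gt0.
- by rewrite gtn_max => -> ->.
apply: leq_trans (ltn_exp2_nsize k) _; rewrite leq_exp2l //.
exact: leq_trans (leq_sumn_map_mem nsize kc) sumn_nsize_consts.
Qed.

Lemma size_dom : size dom <= 3 * N.
Proof.
rewrite size_filter (leq_trans (count_size _ _)) // (size_cat consts) (size_cat (flatten _)).
rewrite !size_flatten /shape -!map_comp.
have h1 := leq_trans (size_le_sumn_nsize consts) sumn_nsize_consts.
have h2 : sumn (map (size \o fun c => map (witness c) (iota 0 (ic_nx c))) eta) <= eta_size eta.
  by apply: leq_sumn_map => c; rewrite /= size_map size_iota /ic_size; lia.
have h3 : sumn (map (size \o fun b => (cover b).2) D) <= facts_size D.
  have -> : map (size \o fun b => (cover b).2) D = map (fun b => size b.2) D.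
    by apply/eq_in_map => b /cover_spec [_ [_ [-> _]]].
  apply: leq_sumn_map => b; apply/leqW/(leq_trans (size_le_sumn_nsize _))/leq_addl.
rewrite /db_size in h1 *; lia.
Qed.

Lemma facts_size_small_world A : (forall p, p < np -> ar p <= A) ->
  facts_size small_world <= np * (3 * N).+1 ^ A * (np + A * N.+2).+1.
Proof.
move=> arA; apply: leq_trans (facts_size_compressed (K := N.+2) _ arA _ _) _ => //.
  have := bound_lt; have := size_dom; have := ltn_expl N (ltnSn 1); rewrite !expnS; lia.
by apply/leq_mul/leqnn; apply/leq_mul/leq_exp2rW/size_dom.
Qed.

End SmallWorld.

(** * The polynomial bound *)

Lemma expSn_le n k : n.+1 ^ k <= 2 ^ k * n ^ k + 2 ^ k.
Proof.
case: (posnP n) => [->|n_gt0]; first by rewrite exp1n (leq_trans _ (leq_addl _ _)) ?expn_gt0.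
by rewrite -expnMn (leq_trans (leq_exp2rW _ (_ : n.+1 <= 2 * n))) ?leq_addr //; lia.
Qed.

Lemma small_world_size_poly np A N (C := np * 3 ^ A * (np + 2 * A + 1) * 2 ^ A.+1) :
  np * (3 * N).+1 ^ A * (np + A * N.+2).+1 <= C * N ^ A.+1 + C.
Proof.
have h1 : (3 * N).+1 ^ A <= 3 ^ A * N.+1 ^ A by rewrite -expnMn leq_exp2rW //; lia.
have h2 : (np + A * N.+2).+1 <= (np + 2 * A + 1) * N.+1 by nia.
apply: (@leq_trans (np * (3 ^ A * N.+1 ^ A) * ((np + 2 * A + 1) * N.+1))).
  by rewrite leq_mul // leq_mul.
have -> : np * (3 ^ A * N.+1 ^ A) * ((np + 2 * A + 1) * N.+1)
        = np * 3 ^ A * (np + 2 * A + 1) * N.+1 ^ A.+1 by rewrite expnSr; nia.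
apply: leq_trans (leq_mul (leqnn (np * 3 ^ A * (np + 2 * A + 1))) (expSn_le N A.+1)) _.
by rewrite /C mulnDr !mulnA.
Qed.

Lemma peval_monomial k n : peval (rcons (nseq k 0) 1) n = n ^ k.
Proof. by elim: k => [|k /= ->]; rewrite /= ?muln0 ?add0n ?expnS. Qed.

Theorem proposition6 (np : nat) (ar : nat -> nat) :
  exists (pol : seq nat) (C : nat),
  forall (D E : seq fact) (eta : seq ic),
    (forall f, f \in D -> wf_fact np ar f) ->
    (forall f, f \in E -> wf_fact np ar f) ->
    (forall c, Stdlib.Lists.List.In c eta -> wf_ic np ar c) ->
    consistent D E eta ->
    exists V : seq fact,
      possible_world_ic D E eta (of_seq V) /\
      facts_size V <= C * peval pol (db_size D E + eta_size eta) + C.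
Proof.
pose A := \max_(p < np) ar p.
have arA p : p < np -> ar p <= A.
  by move=> pn; exact: (@leq_bigmax _ (fun i : 'I_np => ar i) (Ordinal pn)).
exists (rcons (nseq A.+1 0) 1), (np * 3 ^ A * (np + 2 * A + 1) * 2 ^ A.+1).
move=> D E eta wfD _ wfeta [W W_world]; exists (small_world np ar D E eta W).
split; first exact: possible_world_ic_small.
rewrite peval_monomial (leq_trans (facts_size_small_world W_world arA)) //.
exact: small_world_size_poly.
Qed.
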